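(* Let $n\in\mathbb N$, $\Lambda_n=\{0,\frac{1}{n}\pi,\dots,\frac{n-1}{n}\pi\}$, let $\underline\mu:\Lambda_n\to\mathbb N_0$ be any multiplicity function, $A=A(\Lambda_n,\underline\mu)$, $m=\max\{\mu_\alpha:\alpha\in\Lambda_n\}$, $\underline\kappa$ the constant function with value $m$ on $\Lambda_n$, $C=A(\Lambda_n,\underline\kappa)$, and $\Omega:=\operatorname{Hom}_C(A,C)$. Put $\nu_\alpha=m-\mu_\alpha$ for $\alpha\in\Lambda_n$. Then $\Omega\cong\{f\in C:\ f^{(0)}_\alpha=f^{(2)}_\alpha=\dots=f^{(2(\nu_\alpha-1))}_\alpha=0\ \text{for all }\alpha\in\Lambda_n\}$.
   Context: $R=\mathbb C[z_1,z_2]$; for a finite $\Pi\subset\mathbb C$ with pairwise differences not in $\pi\mathbb Z$ and $\underline\mu:\Pi\to\mathbb N_0$, $A(\Pi,\underline\mu)=\{f\in R:l_\alpha^{2\mu_\alpha+1}\mid f-s_\alpha(f)\ \forall\alpha\in\Pi\}$, where $l_\alpha=-\sin(\alpha)z_1+\cos(\alpha)z_2$ and $s_\alpha$ is the involution of $R$ induced by the reflection of $\mathbb C^2$ fixing $\{l_\alpha=0\}$. Polar coordinates $z_1=\rho\cos\varphi$, $z_2=\rho\sin\varphi$; $f^{(k)}_\alpha=\partial^k f/\partial\varphi^k|_{\varphi=\alpha}\in\mathbb C[\rho]$. (The conditions for $\alpha$ with $\nu_\alpha=0$ are empty.) *)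

From Stdlib Require Import Reals.
From HB Require Import structures.
From mathcomp Require Import all_boot all_order all_algebra.
From mathcomp Require Import Rstruct.
From mathcomp Require Import complex.
From mathcomp Require Import mpoly.

Set Implicit Arguments.
Unset Strict Implicit.
Unset Printing Implicit Defensive.

Import Order.TTheory GRing.Theory Num.Theory.
Local Open Scope ring_scope.

Notation CC := (complex R).

Definition cr (r : R) : CC := Complex r 0%R.

(* R = C[z1, z2]; z1 = 'X_0, z2 = 'X_1. *)
Notation Rpoly := {mpoly CC[2]}.

Definition z1 : Rpoly := 'X_(@Ordinal 2 0 isT).
Definition z2 : Rpoly := 'X_(@Ordinal 2 1 isT).

Definition lin (a : R) : Rpoly :=
  (cr (- sin a))%:MP * z1 + (cr (cos a))%:MP * z2.

(* s_alpha : the involution of R induced by the reflection of C^2 fixing the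
   line {l_alpha = 0} = C (cos a, sin a); its matrix is
   [[cos 2a, sin 2a], [sin 2a, - cos 2a]], and (s_alpha f)(z) = f(s_alpha z). *)
Definition refl (a : R) (f : Rpoly) : Rpoly :=
  comp_mpoly [tuple (cr (cos (2 * a)))%:MP * z1 + (cr (sin (2 * a)))%:MP * z2;
                    (cr (sin (2 * a)))%:MP * z1 - (cr (cos (2 * a)))%:MP * z2] f.

(* A(Pi, mu) = { f in R : l_alpha^(2 mu_alpha + 1) | f - s_alpha(f) for all alpha in Pi }.
   Pi is given as a finite list of angles; mu as a function on angles
   (only its values on Pi matter). *)
Definition inA (Pi : seq R) (mu : R -> nat) (f : Rpoly) : Prop :=
  forall a, a \in Pi ->
    exists q : Rpoly, f - refl a f = lin a ^+ (2 * mu a + 1) * q.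

Definition Lambda (n : nat) : seq R :=
  [seq (INR k * PI / INR n)%R | k <- iota 0 n].

(* We work in the polynomial ring C[rho, c, s]
   ({mpoly CC[3]}, rho = 'X_0, c = 'X_1 standing for cos(phi),
   s = 'X_2 standing for sin(phi)).  f(rho cos phi, rho sin phi) is the
   substitution z1 := rho c, z2 := rho s. *)
Notation Ppoly := {mpoly CC[3]}.
Definition prho : Ppoly := 'X_(@Ordinal 3 0 isT).
Definition pc : Ppoly := 'X_(@Ordinal 3 1 isT).
Definition ps : Ppoly := 'X_(@Ordinal 3 2 isT).

Definition polar (f : Rpoly) : Ppoly := comp_mpoly [tuple prho * pc; prho * ps] f.

(* d/dphi on C[rho, cos phi, sin phi]: the derivation with
   d rho/dphi = 0, d cos(phi)/dphi = - sin(phi), d sin(phi)/dphi = cos(phi). *)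
Definition dphi (p : Ppoly) : Ppoly :=
  - ps * mderiv (@Ordinal 3 1 isT) p + pc * mderiv (@Ordinal 3 2 isT) p.

(* f^(k)_alpha = d^k f / dphi^k at phi = alpha, an element of C[rho]
   (represented inside C[rho, c, s], depending on rho only). *)
Definition fder (k : nat) (a : R) (f : Rpoly) : Ppoly :=
  comp_mpoly [tuple prho; (cr (cos a))%:MP; (cr (sin a))%:MP] (iter k dphi (polar f)).

(* Hom_C(A, C): C-linear maps A -> C, represented by functions on R,
   considered only on A. *)
Definition is_hom (inA' inC : Rpoly -> Prop) (phi : Rpoly -> Rpoly) : Prop :=
  (forall a, inA' a -> inC (phi a)) /\
  (forall a b, inA' a -> inA' b -> phi (a + b) = phi a + phi b) /\
  (forall c a, inC c -> inA' a -> phi (c * a) = c * phi a).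

From Stdlib Require Import Reals Lra.
From HB Require Import structures.
From mathcomp Require Import all_boot all_order all_algebra.
From mathcomp Require Import Rstruct complex mpoly.
From mathcomp Require Import ring zify.

(* Every C-linear map phi : A -> C is a multiplication: with Q the product of
   the l_b^(2m+1), Q phi(x) = phi(Q x) = Q x phi(1), as Q lies in C and Q R lies in
   C.  So Omega is the module of g in C with g A in C, and both this module and
   the one in the statement are { g in C : l_a^(2 nu_a) | g for every a }.
   Divisibility by l = l_a is built one power at a time.  Restricting to the
   line {l = 0}, on which s = s_a acts trivially, detects whether l divides a
   polynomial.  If g = l^j h then s g = (-1)^j l^j s h; for odd j the condition
   l^(2m+1) | g - s g forces l | h + s h, hence l | h.  For even j < 2 nu_a one
   uses, in one direction, that f^(j)_a of l^j h is j! rho^j h(rho cos a, rho sin a),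
   and in the other a test element x of A with x - s x = l^(2 mu_a + 1) r and
   l not dividing r, built from the other lines, which are pairwise distinct. *)

Set Implicit Arguments.
Unset Strict Implicit.
Unset Printing Implicit Defensive.

Import Order.TTheory GRing.Theory Num.Theory.
Local Open Scope ring_scope.

HB.instance Definition _ := GRing.RMorphism.copy cr (real_complex R).

Section PowerDivisibility.
Variable T : comPzRingType.
Implicit Types (l x y : T) (j k : nat).

Definition dvdX l k x := exists q, x = l ^+ k * q.

Lemma dvdXW l j k x : (j <= k)%N -> dvdX l k x -> dvdX l j x.
Proof.
move=> lejk [q ->]; exists (l ^+ (k - j) * q).
by rewrite mulrA -exprD subnKC.
Qed.

Lemma dvdXD l k x y : dvdX l k x -> dvdX l k y -> dvdX l k (x + y).
Proof. by move=> [q ->] [r ->]; exists (q + r); rewrite mulrDr. Qed.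

Lemma dvdXN l k x : dvdX l k x -> dvdX l k (- x).
Proof. by move=> [q ->]; exists (- q); rewrite mulrN. Qed.

Lemma dvdXMr l k x y : dvdX l k x -> dvdX l k (x * y).
Proof. by move=> [q ->]; exists (q * y); rewrite mulrA. Qed.

Lemma dvdXMl l j k y : dvdX l k y -> dvdX l (j + k) (l ^+ j * y).
Proof. by move=> [q ->]; exists q; rewrite exprD mulrA. Qed.

Lemma dvdX_of_steps l N x :
  (forall j y, (j < N)%N -> x = l ^+ j * y -> dvdX l 1 y) -> dvdX l N x.
Proof.
move=> step; suff : forall j, (j <= N)%N -> dvdX l j x by apply.
elim=> [|j IHj] ltjN; first by exists x; rewrite mul1r.
have [y xE] := IHj (ltnW ltjN); have [z yE] := step j y ltjN xE.
by exists z; rewrite xE yE mulrA -exprD addn1.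
Qed.

End PowerDivisibility.

Lemma dvdX_cancel (T : idomainType) (l x : T) j k :
  l != 0 -> dvdX l (j + k) (l ^+ j * x) -> dvdX l k x.
Proof.
move=> l_neq0 [q]; rewrite exprD -mulrA => /(mulfI (expf_neq0 j l_neq0)) ->.
by exists q.
Qed.

Section IteratedDerivation.
Variables (T : comPzRingType) (D : T -> T).
Hypothesis D_mul : forall x y, D (x * y) = D x * y + x * D y.

Lemma D_exp x n : D (x ^+ n.+1) = n.+1%:R * x ^+ n * D x.
Proof.
elim: n => [|n IHn]; first by rewrite expr1 expr0 !mul1r.
by rewrite exprS D_mul IHn exprS -!natr1; ring.
Qed.

Lemma iterD_expX_mul L P N k : (k <= N)%N -> exists Q,
  iter k D (L ^+ N * P) = L ^+ (N - k) * ((N ^_ k)%:R * D L ^+ k * P + L * Q).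
Proof.
elim: k => [|k IHk] lekN; first by exists 0; rewrite subn0 ffactn0 mulr0 addr0 !mul1r.
have [Q IHQ] := IHk (ltnW lekN).
have NkE : (N - k = (N - k.+1).+1)%N by rewrite subnSK.
exists ((N - k.+1).+1%:R * D L * Q + D ((N ^_ k)%:R * D L ^+ k * P + L * Q)).
rewrite iterS IHQ NkE D_mul D_exp ffactnSr -NkE natrM NkE !exprS.
by move: (N - k.+1)%N => j; ring.
Qed.

Variables (U : comPzRingType) (ev : {rmorphism T -> U}) (L : T).
Hypothesis ev_L : ev L = 0.

Lemma ev_iterD_expX_mul_low P N k : (k < N)%N -> ev (iter k D (L ^+ N * P)) = 0.
Proof.
move=> ltkN; have [Q ->] := iterD_expX_mul L P (ltnW ltkN).
by rewrite rmorphM rmorphXn ev_L -(subnSK ltkN) expr0n mul0r.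
Qed.

Lemma ev_iterD_expX_mul P N :
  ev (iter N D (L ^+ N * P)) = (N`!)%:R * ev (D L) ^+ N * ev P.
Proof.
have [Q ->] := iterD_expX_mul L P (leqnn N).
by rewrite subnn ffactnn expr0 mul1r !(rmorphM, rmorphD, rmorphXn, rmorph_nat) ev_L mul0r addr0.
Qed.

End IteratedDerivation.

Lemma mpolyXU_neq0 (n : nat) (i : 'I_n) : 'X_i != 0 :> {mpoly CC[n]}.
Proof. by rewrite -msize_poly_eq0 msizeX. Qed.

Lemma comp_mpolyXU_tnth (K : comNzRingType) (n k : nat) (i : 'I_n) (lq : n.-tuple {mpoly K[k]}) :
  'X_i \mPo lq = tnth lq i.
Proof. by rewrite comp_mpolyXU (tnth_nth 0). Qed.

Lemma comp_mpolyA (K : comNzRingType) (n k p : nat) (lq : n.-tuple {mpoly K[k]})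
    (lr : k.-tuple {mpoly K[p]}) (f : {mpoly K[n]}) :
  f \mPo lq \mPo lr = f \mPo [tuple 'X_i \mPo lq \mPo lr | i < n].
Proof.
elim/mpolyind: f => [|c m f _ _ IHf]; first by rewrite !raddf0.
rewrite !(comp_mpolyD, comp_mpolyZ) IHf !comp_mpolyX rmorph_prod.
by congr (_ *: _ + _); apply: eq_bigr => i _; rewrite rmorphXn tnth_mktuple comp_mpolyXU -tnth_nth.
Qed.

Lemma comp_mpoly2A (k p : nat) (lq : 2.-tuple {mpoly CC[k]})
    (lr : k.-tuple {mpoly CC[p]}) (lu : 2.-tuple {mpoly CC[p]}) (f : Rpoly) :
  z1 \mPo lq \mPo lr = z1 \mPo lu -> z2 \mPo lq \mPo lr = z2 \mPo lu ->
  f \mPo lq \mPo lr = f \mPo lu.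
Proof.
rewrite /z1 /z2 => eq1 eq2; rewrite comp_mpolyA; apply: (congr1 (fun t => f \mPo t)).
apply: eq_from_tnth => -[[|[|//]] i];
  rewrite tnth_mktuple (bool_irrelevance i isT) -comp_mpolyXU_tnth; [exact: eq1 | exact: eq2].
Qed.

Lemma mpolyX2E (m : 'X_{1..2}) :
  'X_[m] = z1 ^+ m (@Ordinal 2 0 isT) * z2 ^+ m (@Ordinal 2 1 isT) :> Rpoly.
Proof.
rewrite mpolyXE_id !big_ord_recr big_ord0 /= mul1r /z1 /z2.
by congr (_ ^+ m _ * _ ^+ m _); apply: val_inj.
Qed.

Lemma mpoly_split_z2 (p : Rpoly) : exists q, p = p \mPo [tuple z1; 0] + z2 * q.
Proof.
elim/mpolyind: p => [|c m p _ _ [q pE]]; first by exists 0; rewrite comp_mpoly0 mulr0 addr0.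
rewrite comp_mpolyD comp_mpolyZ mpolyX2E rmorphM !rmorphXn /= /z1 /z2 !comp_mpolyXU /=.
case: (m (@Ordinal 2 1 isT)) => [|k].
  by exists q; rewrite {1}pE /z2 -!mul_mpolyC; ring.
exists (c *: ('X_(@Ordinal 2 0 isT) ^+ m (@Ordinal 2 0 isT) * 'X_(@Ordinal 2 1 isT) ^+ k) + q).
by rewrite expr0n /= mulr0 scaler0 add0r {1}pE /z2 -!mul_mpolyC exprS; ring.
Qed.

HB.instance Definition _ (a : R) :=
  GRing.RMorphism.copy (refl a)
    (comp_mpoly [tuple (cr (cos (2 * a)))%:MP * z1 + (cr (sin (2 * a)))%:MP * z2;
                       (cr (sin (2 * a)))%:MP * z1 - (cr (cos (2 * a)))%:MP * z2]).
HB.instance Definition _ := GRing.RMorphism.copy polar (comp_mpoly [tuple prho * pc; prho * ps]).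

(* The restriction of p to the line {l_a = 0}, parametrized by z1. *)
Definition restr (a : R) (p : Rpoly) : Rpoly :=
  comp_mpoly [tuple (cr (cos a))%:MP * z1; (cr (sin a))%:MP * z1] p.
HB.instance Definition _ (a : R) := GRing.RMorphism.copy (restr a)
  (comp_mpoly [tuple (cr (cos a))%:MP * z1; (cr (sin a))%:MP * z1]).

Section Line.
Variable a : R.
Local Notation C := (cr (cos a)).
Local Notation S := (cr (sin a)).

Lemma sqr_sin_cos : S ^+ 2 + C ^+ 2 = 1.
Proof.
rewrite -!rmorphXn -rmorphD -(rmorph1 cr) !expr2; congr cr.
by have := sin2_cos2 a; rewrite /Rsqr -!RmultE -RplusE.
Qed.

Lemma cos_double : cr (cos (2 * a)) = C ^+ 2 - S ^+ 2.
Proof.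
rewrite -!rmorphXn -rmorphB !expr2; congr cr.
by have := cos_2a a; rewrite -RminusE -!RmultE.
Qed.

Lemma sin_double : cr (sin (2 * a)) = 2 * S * C.
Proof.
rewrite -(rmorph_nat cr 2) -!rmorphM; congr cr.
by have := sin_2a a; rewrite -!RmultE.
Qed.

Lemma sin_sub b : cr (sin (a - b)) = S * cr (cos b) - C * cr (sin b).
Proof.
rewrite -!rmorphM -rmorphB; congr cr.
by have := sin_minus a b; rewrite -RminusE -!RmultE.
Qed.

Lemma refl_z1 : refl a z1 = (C ^+ 2 - S ^+ 2)%:MP * z1 + (2 * S * C)%:MP * z2.
Proof. by rewrite /refl {1}/z1 comp_mpolyXU /= cos_double sin_double. Qed.

Lemma refl_z2 : refl a z2 = (2 * S * C)%:MP * z1 - (C ^+ 2 - S ^+ 2)%:MP * z2.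
Proof. by rewrite /refl {1}/z2 comp_mpolyXU /= cos_double sin_double. Qed.

Lemma refl_mpolyC c : refl a c%:MP = c%:MP.
Proof. exact: comp_mpolyC. Qed.

Lemma refl_lin : refl a (lin a) = - lin a.
Proof.
rewrite {1}/lin rmorphD !rmorphM /= !refl_mpolyC refl_z1 refl_z2 /lin rmorphN.
transitivity (- ((- S * (S ^+ 2 + C ^+ 2))%:MP * z1 + (C * (S ^+ 2 + C ^+ 2))%:MP * z2)).
  by ring.
by rewrite sqr_sin_cos !mulr1.
Qed.

Lemma restr_mpolyC c : restr a c%:MP = c%:MP.
Proof. exact: comp_mpolyC. Qed.

Lemma restr_z1 : restr a z1 = C%:MP * z1.
Proof. exact: comp_mpolyXU. Qed.

Lemma restr_z2 : restr a z2 = S%:MP * z1.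
Proof. exact: comp_mpolyXU. Qed.

Lemma restr_lin b : restr a (lin b) = (cr (sin (a - b)))%:MP * z1.
Proof.
rewrite /lin rmorphD !rmorphM /= !restr_mpolyC.
by rewrite restr_z1 restr_z2 sin_sub rmorphN; ring.
Qed.

Lemma restr_refl p : restr a (refl a p) = restr a p.
Proof.
rewrite /restr /refl; apply: comp_mpoly2A; rewrite -!/(refl a _) -!/(restr a _).
  rewrite refl_z1 rmorphD !rmorphM /= !restr_mpolyC restr_z1 restr_z2.
  transitivity ((C * (S ^+ 2 + C ^+ 2))%:MP * z1); first by ring.
  by rewrite sqr_sin_cos mulr1.
rewrite refl_z2 rmorphB !rmorphM /= !restr_mpolyC restr_z1 restr_z2.
transitivity ((S * (S ^+ 2 + C ^+ 2))%:MP * z1); first by ring.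
by rewrite sqr_sin_cos mulr1.
Qed.

Lemma restr_lin_self : restr a (lin a) = 0.
Proof. by rewrite /lin rmorphD !rmorphM /= !restr_mpolyC restr_z1 restr_z2 rmorphN; ring. Qed.

Lemma restr_eq0 h : restr a h = 0 -> dvdX (lin a) 1 h.
Proof.
move=> restr_h.
(* Rotate coordinates so that l_a becomes z2. *)
pose rot := [tuple C%:MP * z1 - S%:MP * z2; S%:MP * z1 + C%:MP * z2].
pose unrot := [tuple C%:MP * z1 + S%:MP * z2; lin a].
have unrotK : h \mPo rot \mPo unrot = h.
  rewrite -[RHS]comp_mpoly_id; apply: comp_mpoly2A;
    rewrite !comp_mpolyXU_tnth tnth_mktuple /= !(rmorphB, rmorphD, rmorphM) /= !comp_mpolyC
      /lin /z1 /z2 !comp_mpolyXU /= /lin /z1 /z2 rmorphN.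
    transitivity ((S ^+ 2 + C ^+ 2)%:MP * 'X_(@Ordinal 2 0 isT) : Rpoly); first by ring.
    by rewrite sqr_sin_cos mul1r.
  transitivity ((S ^+ 2 + C ^+ 2)%:MP * 'X_(@Ordinal 2 1 isT) : Rpoly); first by ring.
  by rewrite sqr_sin_cos mul1r.
have rot_restr : h \mPo rot \mPo [tuple z1; 0] = restr a h.
  rewrite /restr; apply: comp_mpoly2A;
    by rewrite /z1 /z2 !comp_mpolyXU /= !(rmorphB, rmorphD, rmorphM) /=
      !comp_mpolyC !comp_mpolyXU /=; ring.
have [q rotE] := mpoly_split_z2 (h \mPo rot).
rewrite rot_restr restr_h add0r in rotE.
by exists (q \mPo unrot); rewrite -{1}unrotK rotE rmorphM /= /z2 comp_mpolyXU.
Qed.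

End Line.

Lemma lin_neq0 a : lin a != 0.
Proof.
apply/eqP => lin0; have := restr_lin (a + PI / 2) a.
rewrite lin0 rmorph0 Rplus_minus_l sin_PI2 rmorph1 mul1r => /esym/eqP.
by rewrite (negbTE (mpolyXU_neq0 _)).
Qed.

Lemma mpoly_natr_neq0 (n k : nat) : k != 0%N -> (k%:R : {mpoly CC[n]}) != 0.
Proof. by rewrite -(rmorph_nat (@mpolyC n CC) k) mpolyC_eq0 pnatr_eq0. Qed.

Lemma mpoly_addxx_eq0 (n : nat) (x : {mpoly CC[n]}) : x + x = 0 -> x = 0.
Proof.
move=> /eqP; rewrite -mulr2n -mulr_natl mulf_eq0 (negbTE (mpoly_natr_neq0 _ _)) //.
by move/eqP.
Qed.

Section ReflectionDivisibility.
Variable a : R.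
Local Notation l := (lin a).
Local Notation s := (refl a).
Implicit Types (g h x r : Rpoly).

Lemma refl_linX k : s (l ^+ k) = (-1) ^+ k * l ^+ k.
Proof. by rewrite rmorphXn /= refl_lin -exprNn. Qed.

Lemma refl_linX_odd k x : odd k -> s (l ^+ k * x) = - (l ^+ k * s x).
Proof. by move=> ok; rewrite rmorphM /= refl_linX -signr_odd ok expr1 mulN1r mulNr. Qed.

Lemma refl_linX_even k x : ~~ odd k -> s (l ^+ k * x) = l ^+ k * s x.
Proof. by move=> ek; rewrite rmorphM /= refl_linX -signr_odd (negbTE ek) expr0 mul1r. Qed.

Lemma restr_eq0P x : restr a x = 0 <-> dvdX l 1 x.
Proof.
split; first exact: restr_eq0.
by case=> q ->; rewrite expr1 rmorphM /= restr_lin_self mul0r.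
Qed.

Lemma dvdX_sub_refl_odd k x : odd k -> dvdX l k x -> dvdX l k (x - s x).
Proof. by move=> ok [q ->]; rewrite refl_linX_odd // opprK; exists (q + s q); rewrite mulrDr. Qed.

Lemma dvdX_step_odd j h : odd j ->
  dvdX l j.+1 (l ^+ j * h - s (l ^+ j * h)) -> dvdX l 1 h.
Proof.
move=> oj; rewrite refl_linX_odd // opprK -mulrDr -[j.+1]addn1 => /(dvdX_cancel (lin_neq0 a)).
by move/restr_eq0P; rewrite rmorphD /= restr_refl => /mpoly_addxx_eq0/restr_eq0P.
Qed.

Lemma dvdX_step_even j k N g h x r : ~~ odd j -> (j + k < N)%N ->
  x - s x = l ^+ k * r -> restr a r != 0 ->
  dvdX l N (g - s g) -> dvdX l N (g * x - s (g * x)) -> g = l ^+ j * h -> dvdX l 1 h.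
Proof.
move=> ej ltN xE r_neq0 dg dgx gE.
have sxE : s x = x - l ^+ k * r by rewrite -xE; ring.
have diffE : g * x - s (g * x) - (g - s g) * x = l ^+ (j + k) * (s h * r).
  by rewrite rmorphM /= sxE gE refl_linX_even // exprD; ring.
have dshr : dvdX l (N - (j + k)) (s h * r).
  apply: (dvdX_cancel (j := j + k) (lin_neq0 a)); rewrite subnKC ?(ltnW ltN) // -diffE.
  by apply: dvdXD dgx _; apply: dvdXN; apply: dvdXMr dg.
have /restr_eq0P : dvdX l 1 (s h * r) by apply: dvdXW dshr; rewrite subn_gt0.
rewrite rmorphM /= -(mul0r (restr a r)) => /(mulIf r_neq0).
by rewrite restr_refl => /restr_eq0P.
Qed.

Lemma dvdX_of_even_steps N M g : (N <= M)%N -> dvdX l M (g - s g) ->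
  (forall j h, (j < N)%N -> ~~ odd j -> g = l ^+ j * h -> dvdX l 1 h) -> dvdX l N g.
Proof.
move=> leNM dg even_step; apply: dvdX_of_steps => j h ltjN gE.
have [oj|ej] := boolP (odd j); last exact: (even_step j h ltjN ej gE).
apply: dvdX_step_odd oj _; rewrite -gE; apply: dvdXW dg.
exact: leq_trans ltjN leNM.
Qed.

Lemma dvdX_mul_sub_refl j k g x : ~~ odd j -> dvdX l j g ->
  dvdX l (j + k) (g - s g) -> dvdX l k (x - s x) -> dvdX l (j + k) (g * x - s (g * x)).
Proof.
move=> ej [h ->] dg dx.
have -> : l ^+ j * h * x - s (l ^+ j * h * x)
    = (l ^+ j * h - s (l ^+ j * h)) * x + l ^+ j * ((x - s x) * s h).
  by rewrite rmorphM /= !refl_linX_even //; move: (s h) (s x) => sh sx; ring.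
apply: dvdXD; first exact: dvdXMr dg.
apply: (dvdXMl j); exact: dvdXMr dx.
Qed.

End ReflectionDivisibility.

Lemma mderivXU (n : nat) (i j : 'I_n) : mderiv i ('X_j : {mpoly CC[n]}) = (j == i)%:R.
Proof.
rewrite mderivX mnm1E; case: eqP => [->|_]; last by rewrite scale0r.
rewrite (_ : (U_(i) - U_(i))%MM = 0%MM) ?mpolyX0 ?scale1r //.
by apply/mnmP => k; rewrite mnmBE mnm0E subnn.
Qed.

Lemma dphiD : {morph dphi : p q / p + q}.
Proof. by move=> p q; rewrite /dphi !mderivD; ring. Qed.

Lemma dphiM p q : dphi (p * q) = dphi p * q + p * dphi q.
Proof. by rewrite /dphi !mderivM; ring. Qed.

Lemma dphiC c : dphi c%:MP = 0.
Proof. by rewrite /dphi !mderivC !mulr0 addr0. Qed.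

Lemma dphi_rho : dphi prho = 0.
Proof. by rewrite /dphi /prho !mderivXU !mulr0 addr0. Qed.

Lemma dphi_c : dphi pc = - ps.
Proof. by rewrite /dphi /pc !mderivXU /= mulr0 addr0 mulr1. Qed.

Lemma dphi_s : dphi ps = pc.
Proof. by rewrite /dphi /ps !mderivXU /= mulr0 add0r mulr1. Qed.

Definition at_angle (a : R) (p : Ppoly) : Ppoly :=
  comp_mpoly [tuple prho; (cr (cos a))%:MP; (cr (sin a))%:MP] p.
HB.instance Definition _ (a : R) := GRing.RMorphism.copy (at_angle a)
  (comp_mpoly [tuple prho; (cr (cos a))%:MP; (cr (sin a))%:MP]).

Section Polar.
Variable a : R.
Local Notation C := (cr (cos a)).
Local Notation S := (cr (sin a)).

Lemma fderE k f : fder k a f = at_angle a (iter k dphi (polar f)).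
Proof. by []. Qed.

Lemma polar_lin : polar (lin a) = prho * ((- S)%:MP * pc + C%:MP * ps).
Proof.
rewrite /lin rmorphD !rmorphM /= /polar !comp_mpolyC /z1 /z2 !comp_mpolyXU /= rmorphN.
by rewrite -/prho -/pc -/ps; ring.
Qed.

Lemma at_angle_mpolyC c : at_angle a c%:MP = c%:MP.
Proof. exact: comp_mpolyC. Qed.

Lemma at_angle_rho : at_angle a prho = prho.
Proof. exact: comp_mpolyXU. Qed.

Lemma at_angle_c : at_angle a pc = C%:MP.
Proof. exact: comp_mpolyXU. Qed.

Lemma at_angle_s : at_angle a ps = S%:MP.
Proof. exact: comp_mpolyXU. Qed.

Lemma at_angle_polar_lin : at_angle a (polar (lin a)) = 0.
Proof.
rewrite polar_lin !(rmorphM, rmorphD) /= !at_angle_mpolyC at_angle_rho at_angle_c at_angle_s.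
by ring.
Qed.

Lemma at_angle_dphi_polar_lin : at_angle a (dphi (polar (lin a))) = prho.
Proof.
rewrite polar_lin dphiM dphi_rho mul0r add0r dphiD !dphiM !dphiC dphi_c dphi_s !mul0r !add0r.
rewrite !(rmorphM, rmorphD, rmorphN) /= !at_angle_mpolyC at_angle_rho at_angle_c at_angle_s.
transitivity ((S ^+ 2 + C ^+ 2)%:MP * prho); first by ring.
by rewrite sqr_sin_cos mul1r.
Qed.

Lemma restr_polar h : at_angle a (polar h) \mPo [tuple z1; 0; 0] = restr a h.
Proof.
rewrite /at_angle /polar /= comp_mpolyA; apply: comp_mpoly2A;
  rewrite /z1 /z2 !comp_mpolyXU /= rmorphM /= /prho /pc /ps !comp_mpolyXU_tnth !tnth_mktuple
    !comp_mpolyXU /= ?comp_mpolyC ?comp_mpolyXU /=; ring.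
Qed.

Lemma fder_linX_low k N h : (k < N)%N -> fder k a (lin a ^+ N * h) = 0.
Proof.
rewrite fderE rmorphM rmorphXn /=.
exact: (ev_iterD_expX_mul_low dphiM at_angle_polar_lin).
Qed.

Lemma fder_linX_top N h : fder N a (lin a ^+ N * h) = 0 -> restr a h = 0.
Proof.
rewrite fderE rmorphM rmorphXn /= (ev_iterD_expX_mul dphiM at_angle_polar_lin) /=.
rewrite at_angle_dphi_polar_lin -restr_polar => /eqP.
rewrite !mulf_eq0 (negbTE (mpoly_natr_neq0 _ _)) ?expf_eq0 /prho
  ?(negbTE (mpolyXU_neq0 _)) ?andbF /=; last by rewrite -lt0n fact_gt0.
by move=> /eqP ->; rewrite comp_mpoly0.
Qed.

End Polar.

Lemma fder_of_dvdX a k N g : dvdX (lin a) N g -> (k < N)%N -> fder k a g = 0.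
Proof. by move=> [h ->]; exact: fder_linX_low. Qed.

Lemma inA_1 (s : seq R) (nu : R -> nat) : inA s nu 1.
Proof. by move=> b _; exists 0; rewrite rmorph1 subrr mulr0. Qed.

Lemma inA_of_dvdX (s : seq R) (nu : R -> nat) f :
  {in s, forall b, dvdX (lin b) (2 * nu b + 1) f} -> inA s nu f.
Proof. by move=> df b sb; apply: dvdX_sub_refl_odd (df b sb); rewrite addn1 /= oddM. Qed.

Lemma inA_prod_lin_mul (s : seq R) m y :
  inA s (fun _ => m) (\prod_(b <- s) lin b ^+ (2 * m + 1) * y).
Proof.
apply: inA_of_dvdX => b sb; exists (\prod_(c <- rem b s) lin c ^+ (2 * m + 1) * y).
by rewrite (big_rem b sb) mulrA.
Qed.

Lemma prod_lin_neq0 (s : seq R) k : \prod_(b <- s) lin b ^+ k != 0.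
Proof. by rewrite prodf_seq_neq0; apply/allP => b _; rewrite expf_neq0 ?lin_neq0. Qed.

Section Multipliers.
Variables (s : seq R) (mu : R -> nat) (m : nat).
Hypothesis mu_le : {in s, forall b, (mu b <= m)%N}.
Local Notation inAmu := (inA s mu).
Local Notation inC := (inA s (fun _ => m)).

Lemma is_hom_mulE phi : is_hom inAmu inC phi -> forall x, inAmu x -> phi x = phi 1 * x.
Proof.
move=> [_ [_ phiZ]] x Ax; set Q := \prod_(b <- s) lin b ^+ (2 * m + 1).
have CQ : inC Q by rewrite -[Q]mulr1; exact: inA_prod_lin_mul.
apply: (mulfI (prod_lin_neq0 s (2 * m + 1))); rewrite -/Q -(phiZ _ _ CQ Ax).
have := phiZ (Q * x) 1 (@inA_prod_lin_mul s m x) (@inA_1 s mu).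
by rewrite !mulr1 => ->; rewrite -mulrA [x * _]mulrC.
Qed.

Lemma inC_mul g x : inC g -> {in s, forall b, dvdX (lin b) (2 * (m - mu b)) g} ->
  inAmu x -> inC (g * x).
Proof.
move=> Cg dg Ax b sb.
have mE : (2 * m + 1 = 2 * (m - mu b) + (2 * mu b + 1))%N by have := mu_le sb; lia.
rewrite mE; apply: dvdX_mul_sub_refl; first by rewrite oddM.
- exact: dg.
- by rewrite -mE; exact: Cg.
- exact: Ax.
Qed.

Lemma dvdX_of_fder g a : inC g -> a \in s ->
  (forall j, (j < m - mu a)%N -> fder (2 * j) a g = 0) -> dvdX (lin a) (2 * (m - mu a)) g.
Proof.
move=> Cg sa fg; apply: (dvdX_of_even_steps (M := 2 * m + 1)) (Cg a sa) _; first lia.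
move=> j h ltj ej gE; apply/restr_eq0P/(fder_linX_top (N := j)); rewrite -gE.
have -> : j = (2 * j./2)%N by rewrite -[LHS]odd_double_half (negbTE ej) add0n mul2n.
by apply: fg; rewrite -(odd_double_half j) (negbTE ej) add0n -mul2n in ltj; lia.
Qed.

Hypothesis s_sep : {in s &, forall a b, a != b -> sin (a - b) != 0}.

Lemma inA_exact_order a : a \in s -> exists x r,
  [/\ inAmu x, x - refl a x = lin a ^+ (2 * mu a + 1) * r & restr a r != 0].
Proof.
move=> sa; pose F := \prod_(b <- s | b != a) lin b ^+ (2 * m + 1).
exists (lin a ^+ (2 * mu a + 1) * F), (F + refl a F); split.
- apply: inA_of_dvdX => b sb; have [->|ba] := eqVneq b a; first by exists F.
  apply: (dvdXW (k := 2 * m + 1)); first by have := mu_le sb; lia.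
  exists (lin a ^+ (2 * mu a + 1) * \prod_(c <- rem b s | c != a) lin c ^+ (2 * m + 1)).
  by rewrite /F (big_rem b sb) /= ba mulrCA.
- by rewrite refl_linX_odd ?opprK ?mulrDr // addn1 /= oddM.
- rewrite rmorphD /= restr_refl; apply/eqP => /mpoly_addxx_eq0/eqP; apply/negP.
  rewrite rmorph_prod prodf_seq_neq0; apply/allP => b sb; apply/implyP => ba.
  rewrite rmorphXn /= restr_lin expf_neq0 // mulf_neq0 ?mpolyXU_neq0 //.
  by rewrite mpolyC_eq0 fmorph_eq0 s_sep // eq_sym.
Qed.

Lemma dvdX_of_mul_inC g a : inC g -> (forall x, inAmu x -> inC (g * x)) -> a \in s ->
  dvdX (lin a) (2 * (m - mu a)) g.
Proof.
move=> Cg gC sa; have [x [r [Ax xE r_neq0]]] := inA_exact_order sa.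
apply: (dvdX_of_even_steps (M := 2 * m + 1)) (Cg a sa) _; first lia.
move=> j h ltj ej gE; apply: (dvdX_step_even ej _ xE r_neq0 (Cg a sa) (gC x Ax a sa) gE).
by have := mu_le sa; lia.
Qed.

End Multipliers.

Lemma Lambda_bounds n x : (0 < n)%N -> x \in Lambda n -> Rle 0 x /\ Rlt x PI.
Proof.
move=> n_gt0 /mapP [k]; rewrite mem_iota add0n => /andP [_ ltkn] ->.
have n_pos : Rlt 0 (INR n) by apply: lt_0_INR; exact/ssrnat.ltP.
have k_lt_n : Rlt (INR k) (INR n) by apply: lt_INR; exact/ssrnat.ltP.
have nV_pos : Rlt 0 (Rinv (INR n)) by apply: Rinv_0_lt_compat.
split.
  apply: Rmult_le_pos; last exact: Rlt_le.
  by apply: Rmult_le_pos; [exact: pos_INR | exact/Rlt_le/PI_RGT_0].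
rewrite -[X in Rlt _ X](Rmult_inv_r_id_m (INR n) PI); last exact: Rgt_not_eq.
by apply/Rmult_lt_compat_r/Rmult_lt_compat_r => //; exact: PI_RGT_0.
Qed.

Lemma Lambda_sep n : (0 < n)%N -> {in Lambda n &, forall a b, a != b -> sin (a - b) != 0}.
Proof.
move=> n_gt0 a b /(Lambda_bounds n_gt0) [a_ge0 a_lt] /(Lambda_bounds n_gt0) [b_ge0 b_lt].
move=> /eqP neq; apply/eqP => sin0; have {}sin0 : sin (a - b) = R0 := sin0.
case: (Rtotal_order a b) => [lt|[eq|gt]]; last 2 first.
- exact: neq.
- by have := sin_gt_0 (a - b) ltac:(lra) ltac:(lra); rewrite sin0; lra.
have := sin_gt_0 (b - a) ltac:(lra) ltac:(lra).
by rewrite -Ropp_minus_distr sin_neg sin0; lra.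
Qed.

Theorem theorem3p10 (n : nat) (mu : R -> nat) :
  (0 < n)%N ->
  let m := (\max_(a <- Lambda n) mu a)%N in
  let inAmu := inA (Lambda n) mu in
  let inC := inA (Lambda n) (fun _ => m) in
  let inM := fun f : Rpoly =>
    inC f /\ forall a, a \in Lambda n ->
      forall j, (j < m - mu a)%N -> fder (2 * j) a f = 0 in
  exists Psi : Rpoly -> Rpoly -> Rpoly,
    (forall g, inM g -> is_hom inAmu inC (Psi g)) /\
    (forall c g h, inC c -> inM g -> inM h ->
       forall a, inAmu a -> Psi (c * g + h) a = c * Psi g a + Psi h a) /\
    (forall g h, inM g -> inM h ->
       (forall a, inAmu a -> Psi g a = Psi h a) -> g = h) /\
    (forall phi, is_hom inAmu inC phi ->
       exists g, inM g /\ forall a, inAmu a -> phi a = Psi g a).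
Proof.
move=> n_gt0 m inAmu inC inM.
have mu_le : {in Lambda n, forall b, (mu b <= m)%N} by move=> b sb; apply: leq_bigmax_seq.
exists (fun g x => g * x); split; [|split; [|split]].
- move=> g [Cg fg]; split; [|split] => [x Ax | x y _ _ | c x _ _].
  + apply: (inC_mul mu_le Cg _ Ax) => a sa.
    exact: dvdX_of_fder Cg sa (fg a sa).
  + exact: mulrDr.
  + exact: mulrCA.
- by move=> c g h _ _ _ x _; rewrite mulrDl mulrA.
- by move=> g h _ _ /(_ 1 (@inA_1 (Lambda n) mu)); rewrite !mulr1.
- move=> phi hom_phi; have phiE := is_hom_mulE hom_phi.
  have C1 : inC (phi 1) := hom_phi.1 1 (@inA_1 (Lambda n) mu).
  exists (phi 1); split=> //; split=> // a sa j ltj.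
  apply: (fder_of_dvdX (N := 2 * (m - mu a))); last lia.
  apply: (dvdX_of_mul_inC mu_le (Lambda_sep n_gt0) C1 _ sa) => x Ax.
  by rewrite -(phiE x Ax); exact: hom_phi.1 x Ax.
Qed.
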